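(* Let ${\cal D}$ be a set of directions with $0\le\alpha({\cal D})\le\pi/2$, and let $r=1-O(\sqrt{\log n/n})$ (i.e. $r = 1 - c\sqrt{\log n / n}$ for a fixed constant $c>0$). Then the set of points of the unit disk $B_1$ that are unsafe relative to $B_r$ can be covered by a union of $O(1)$ caps of $B_1$, where the base of each such cap has length $O((\log n/n)^{1/4})$ and its height is $O(\sqrt{\log n/n})$.
   Context: $B_r$ denotes the disk of radius $r$ centered at the origin $o$. A cap of $B_1$ is a region of $B_1$ cut off by a chord (its base); its height is the maximal distance from the chord to the arc. A set of directions is a set ${\cal D}$ of unit vectors in $\mathbb{R}^2$ such that $v\in{\cal D}$ implies $-v\in{\cal D}$. A pair $v_1,v_2\in{\cal D}$ is a ${\cal D}$-pair if $v_2$ is counterclockwise from $v_1$ and no vector of ${\cal D}$ lies strictly between them; $\alpha({\cal D})$ is the maximum over ${\cal D}$-pairs of the counterclockwise angle from $v_1$ to $v_2$. With $\mathrm{pspan}(u_1,u_2)$ the open wedge of positive combinations, ${\cal Q}({\cal D})$ consists of the open half-planes bounded by lines through the origin with direction in ${\cal D}$ together with the wedges $\mathrm{pspan}(-v_1,v_2)$ and $\mathrm{pspan}(v_1,-v_2)$ for every ${\cal D}$-pair $(v_1,v_2)$; ${\cal T}({\cal D})$ is the set of all their translates, and $\mathcal{CH}_{{\cal D}}(S)=\mathbb{R}^2\setminus\bigcup\{I\in{\cal T}({\cal D}) : I\cap S=\emptyset\}$. A point $p\in B_1$ is safe relative to $B_r$ if the segment $op$ is contained in $\mathcal{CH}_{{\cal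 D}}(B_r\cup\{p\})$; otherwise it is unsafe. The implied constants in $O(\cdot)$ may depend on the constant in the definition of $r$ but not on $n$ or ${\cal D}$. *)

From Stdlib Require Import Reals Lra List.
Open Scope R_scope.

Definition pt := (R * R)%type.

Definition padd (p q : pt) : pt := (fst p + fst q, snd p + snd q).
Definition psub (p q : pt) : pt := (fst p - fst q, snd p - snd q).
Definition pscale (a : R) (p : pt) : pt := (a * fst p, a * snd p).
Definition popp (p : pt) : pt := (- fst p, - snd p).
Definition dot (p q : pt) : R := fst p * fst q + snd p * snd q.
Definition cross (p q : pt) : R := fst p * snd q - snd p * fst q.
Definition pnorm (p : pt) : R := sqrt (dot p p).

Definition origin : pt := (0, 0).

Definition disk (r : R) (p : pt) : Prop := pnorm p <= r.

Definition rot (th : R) (p : pt) : pt :=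
  (cos th * fst p - sin th * snd p, sin th * fst p + cos th * snd p).

Definition ccw_angle (u w : pt) (th : R) : Prop :=
  0 <= th < 2 * PI /\ w = rot th u.

Definition direction_set (D : pt -> Prop) : Prop :=
  (forall v, D v -> dot v v = 1) /\ (forall v, D v -> D (popp v)).

Definition finite_set (D : pt -> Prop) : Prop :=
  exists l : list pt, forall v, D v <-> In v l.

Definition Dpair (D : pt -> Prop) (v1 v2 : pt) : Prop :=
  D v1 /\ D v2 /\ v1 <> v2 /\
  exists th, ccw_angle v1 v2 th /\
    forall w phi, D w -> ccw_angle v1 w phi -> ~ (0 < phi < th).

(* alpha(D) <= a : every D-pair spans a counterclockwise angle <= a
   (alpha(D) is the maximum of these angles). *)
Definition alpha_le (D : pt -> Prop) (a : R) : Prop :=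
  forall v1 v2 th, Dpair D v1 v2 -> ccw_angle v1 v2 th -> th <= a.

Definition pspan (u1 u2 : pt) (x : pt) : Prop :=
  exists a b, 0 < a /\ 0 < b /\ x = padd (pscale a u1) (pscale b u2).

Definition inQ (D : pt -> Prop) (I : pt -> Prop) : Prop :=
  (exists d, D d /\ forall x, I x <-> 0 < cross d x) \/
  (exists d, D d /\ forall x, I x <-> cross d x < 0) \/
  (exists v1 v2, Dpair D v1 v2 /\
     ((forall x, I x <-> pspan (popp v1) v2 x) \/
      (forall x, I x <-> pspan v1 (popp v2) x))).

Definition inT (D : pt -> Prop) (I : pt -> Prop) : Prop :=
  exists Q t, inQ D Q /\ forall x, I x <-> Q (psub x t).

Definition CH_D (D : pt -> Prop) (S : pt -> Prop) (x : pt) : Prop :=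
  forall I, inT D I -> (forall y, I y -> ~ S y) -> ~ I x.

Definition segment (p q : pt) (x : pt) : Prop :=
  exists s, 0 <= s <= 1 /\ x = padd (pscale (1 - s) p) (pscale s q).

Definition safe (D : pt -> Prop) (r : R) (p : pt) : Prop :=
  disk 1 p /\
  forall x, segment origin p x ->
    CH_D D (fun y => disk r y \/ y = p) x.

Definition unsafe (D : pt -> Prop) (r : R) (p : pt) : Prop :=
  disk 1 p /\ ~ safe D r p.

(* The cap of B_1 cut off by the chord {x : dot u x = t} (u a unit vector,
   -1 < t < 1), on the side dot u x >= t.  Its height is 1 - t and its base
   (the chord) has length 2 * sqrt (1 - t^2). *)
Definition cap (u : pt) (t : R) (x : pt) : Prop :=
  disk 1 x /\ t <= dot u x.
Definition valid_cap (u : pt) (t : R) : Prop := dot u u = 1 /\ -1 < t < 1.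
Definition cap_height (t : R) : R := 1 - t.
Definition cap_base (t : R) : R := 2 * sqrt (1 - t * t).

Definition lnn (n : nat) : R := ln (INR n) / INR n.

(* An unsafe point p is cut off from B_r by a translated wedge pspan(-v1,v2) or
   pspan(v1,-v2) of a D-pair (half-planes are convex, so they cannot separate o from
   p on the segment op).  Testing the wedge against o, p and the two points of B_r at
   distance r along its inner normals shows that p lies at distance more than r along
   one of the four axis directions +-v1, +-v1^perp, and that cos(th)^2 r^2 < 1 - r^2
   for the angle th of the pair.  For r close to 1 this forces a gap of angle almost
   pi/2 after v1 in D.  Three pairwise non-parallel unit vectors cannot all be almost
   orthogonal to each other, so up to sign at most two directions of D are followed by
   such a gap, and the 8 caps of height 1 - r along their axes cover all unsafe
   points. *)
From Stdlib Require Import Reals List Lra Psatz Classical.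
Open Scope R_scope.

Definition rot90 (v : pt) : pt := (- snd v, fst v).

Definition axes (v : pt) : list pt := v :: popp v :: rot90 v :: popp (rot90 v) :: nil.

(* The translate of an open wedge bounded by the lines with inner normals m1, m2
   through its apex t. *)
Definition wedge (m1 m2 t y : pt) : Prop := dot m1 t < dot m1 y /\ dot m2 t < dot m2 y.

Definition wide_gap (D : pt -> Prop) (v : pt) : Prop :=
  D v /\ forall w, D w -> 0 < cross v w -> dot v w <= 1/6.

Definition axis_caps (a b : pt) (t : R) : list (pt * R) :=
  map (fun u => (u, t)) (axes a ++ axes b).

Lemma dot_comm (u v : pt) : dot u v = dot v u.
Proof. destruct u, v; unfold dot; simpl; ring. Qed.

Lemma dot_pscale_r (k : R) (u v : pt) : dot u (pscale k v) = k * dot u v.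
Proof. destruct u, v; unfold dot, pscale; simpl; ring. Qed.

Lemma dot_origin_r (u : pt) : dot u origin = 0.
Proof. destruct u; unfold dot, origin; simpl; ring. Qed.

Lemma cross_popp_l (u v : pt) : cross (popp u) v = - cross u v.
Proof. destruct u, v; unfold cross, popp; simpl; ring. Qed.

Lemma cross_popp_r (u v : pt) : cross u (popp v) = - cross u v.
Proof. destruct u, v; unfold cross, popp; simpl; ring. Qed.

Lemma popp_popp (u : pt) : popp (popp u) = u.
Proof. destruct u; unfold popp; simpl; f_equal; ring. Qed.

Lemma rot90_popp (u : pt) : rot90 (popp u) = popp (rot90 u).
Proof. destruct u; unfold rot90, popp; simpl; reflexivity. Qed.

Lemma rot90_rot90 (u : pt) : rot90 (rot90 u) = popp u.
Proof. destruct u; unfold rot90, popp; simpl; reflexivity. Qed.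

Lemma rot_rot90 (th : R) (u : pt) : rot th (rot90 u) = rot90 (rot th u).
Proof. destruct u; unfold rot, rot90; simpl; f_equal; ring. Qed.

Lemma rot_popp (th : R) (u : pt) : rot th (popp u) = popp (rot th u).
Proof. destruct u; unfold rot, popp; simpl; f_equal; ring. Qed.

Lemma dot_rot_r (th : R) (u v : pt) :
  dot (rot th u) v = cos th * dot u v + sin th * dot (rot90 u) v.
Proof. destruct u, v; unfold dot, rot, rot90; simpl; ring. Qed.

Lemma cross_rot_r (th : R) (u : pt) : cross u (rot th u) = sin th * dot u u.
Proof. destruct u; unfold cross, dot, rot; simpl; ring. Qed.

Lemma dot_rot_rot (th : R) (u : pt) : dot (rot th u) (rot th u) = dot u u.
Proof.
  pose proof (sin2_cos2 th) as H. unfold Rsqr in H.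
  destruct u as [a b]; unfold dot, rot; simpl.
  transitivity ((sin th * sin th + cos th * cos th) * (a * a + b * b)); [ring|].
  rewrite H; ring.
Qed.

(* Lagrange's identity in the plane: the coordinates of v and w in the frame
   (u, u^perp) determine their inner product. *)
Lemma dot_frame (u v w : pt) :
  dot u u * dot v w = dot u v * dot u w + cross u v * cross u w.
Proof. destruct u, v, w; unfold dot, cross; simpl; ring. Qed.

Lemma unit_cross0 (u v : pt) :
  dot u u = 1 -> dot v v = 1 -> cross u v = 0 -> v = u \/ v = popp u.
Proof.
  intros Hu Hv Hc. pose proof (dot_frame u v v) as S. rewrite Hu, Hv, Hc in S.
  assert (Hd : dot u v = 1 \/ dot u v = -1) by nra.
  assert (Dec : v = padd (pscale (dot u v) u) (pscale (cross u v) (rot90 u))).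
  { destruct u as [a b], v as [x y]; unfold dot, cross, padd, pscale, rot90 in *; simpl in *.
    f_equal; [transitivity (x * (a * a + b * b)) | transitivity (y * (a * a + b * b))];
    (rewrite Hu; ring) || ring. }
  rewrite Hc in Dec. destruct Hd as [H | H]; rewrite H in Dec; [left | right]; rewrite Dec;
  destruct u; unfold padd, pscale, rot90, popp; simpl; f_equal; ring.
Qed.

Lemma axes_unit (v u : pt) : dot v v = 1 -> In u (axes v) -> dot u u = 1.
Proof.
  intros Hv Hu. destruct v as [a b]; unfold axes, dot, popp, rot90 in *; simpl in *.
  repeat (destruct Hu as [<- | Hu]; [simpl; lra |]). contradiction.
Qed.

Lemma axes_popp (v u : pt) : In u (axes (popp v)) -> In u (axes v).
Proof.
  unfold axes. rewrite popp_popp, rot90_popp, popp_popp. simpl. tauto.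
Qed.

Lemma axes_rot90 (v u : pt) : In u (axes v) -> In (rot90 u) (axes v).
Proof.
  unfold axes. simpl. intros [<- | [<- | [<- | [<- | []]]]];
    rewrite ?rot90_popp, ?rot90_rot90, ?popp_popp; tauto.
Qed.

Lemma disk_dot (r : R) (q : pt) : 0 <= r -> dot q q <= r * r -> disk r q.
Proof.
  intros Hr Hq. unfold disk, pnorm. rewrite <- (sqrt_square r Hr).
  apply sqrt_le_1_alt; exact Hq.
Qed.

Lemma disk_dot_le1 (p : pt) : disk 1 p -> dot p p <= 1.
Proof.
  unfold disk, pnorm. intro H. apply Rnot_lt_le. intro Hlt.
  assert (Hs : sqrt 1 < sqrt (dot p p)) by (apply sqrt_lt_1_alt; lra).
  rewrite sqrt_1 in Hs. lra.
Qed.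

Lemma pspan_opp_l_iff (v1 v2 z : pt) : 0 < cross v1 v2 ->
  pspan (popp v1) v2 z <-> 0 < cross v1 z /\ 0 < cross v2 z.
Proof.
  intro Hk. split.
  - intros (a & b & Ha & Hb & ->). destruct v1 as [p q], v2 as [u v].
    unfold cross, padd, pscale, popp in *; simpl in *. split; nra.
  - intros [H1 H2]. set (k := cross v1 v2) in *.
    exists (cross v2 z / k), (cross v1 z / k).
    split; [apply Rdiv_lt_0_compat; lra |]. split; [apply Rdiv_lt_0_compat; lra |].
    unfold k in *. destruct v1 as [p q], v2 as [u v], z as [x y].
    unfold cross, padd, pscale, popp in *; simpl in *. f_equal; field; lra.
Qed.

Lemma pspan_opp_r_iff (v1 v2 z : pt) :
  pspan v1 (popp v2) z <-> pspan (popp v1) v2 (popp z).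
Proof.
  split; intros (a & b & Ha & Hb & Hz); exists a, b; (split; [exact Ha | split; [exact Hb |]]).
  - rewrite Hz. destruct v1, v2; unfold padd, pscale, popp; simpl; f_equal; ring.
  - rewrite <- (popp_popp z), Hz. destruct v1, v2; unfold padd, pscale, popp; simpl; f_equal; ring.
Qed.

Lemma translated_pspan_wedge (v1 v2 t y : pt) : 0 < cross v1 v2 ->
  (pspan (popp v1) v2 (psub y t) <-> wedge (rot90 v1) (rot90 v2) t y) /\
  (pspan v1 (popp v2) (psub y t) <-> wedge (popp (rot90 v1)) (popp (rot90 v2)) t y).
Proof.
  intro Hk. rewrite pspan_opp_r_iff, !pspan_opp_l_iff by exact Hk. unfold wedge.
  destruct v1, v2, t, y; unfold cross, dot, rot90, psub, popp; simpl.
  split; split; intros [? ?]; split; lra.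
Qed.

Lemma halfplane_segment (d t p : pt) (s : R) (I : pt -> Prop) :
  (forall x, I x <-> 0 < cross d (psub x t)) -> 0 <= s <= 1 ->
  I (pscale s p) -> I origin \/ I p.
Proof.
  intros HI Hs. rewrite !HI.
  replace (cross d (psub (pscale s p) t))
    with ((1 - s) * cross d (psub origin t) + s * cross d (psub p t))
    by (destruct d, t, p; unfold cross, psub, pscale, origin; simpl; ring).
  intro H. destruct (Rlt_or_le 0 (cross d (psub origin t))); [left; exact H0 |].
  right. nra.
Qed.

Lemma wedge_exit_one_side (a1 a2 g1 g2 c0 r s : R) :
  0 <= s <= 1 -> 0 <= c0 -> 0 <= r -> a1 <= 0 ->
  0 < a1 + s * g1 -> 0 < a2 + s * g2 ->
  ~ (0 < a1 + g1 /\ 0 < a2 + g2) -> ~ (0 < a1 + r /\ 0 < a2 + r * c0) ->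
  r < g1 /\ g2 < 0.
Proof.
  intros Hs Hc0 Hr Ha1 Hin1 Hin2 Hp Hq.
  assert (Hg1 : 0 < g1) by nra.
  assert (Hp1 : 0 < a1 + g1) by nra.
  assert (Hp2 : a2 + g2 <= 0) by (apply Rnot_lt_le; intro; tauto).
  assert (Ha2 : 0 < a2) by nra.
  assert (Hq1 : a1 + r <= 0) by (apply Rnot_lt_le; intro; apply Hq; split; nra).
  split; lra.
Qed.

(* With a_i = - m_i.t, g_i = m_i.p and c0 = m1.m2, the hypotheses say that the wedge
   [wedge m1 m2 t] contains s p but none of o, p, r m1, r m2. *)
Lemma wedge_exit (a1 a2 g1 g2 c0 r s : R) :
  0 <= s <= 1 -> 0 <= c0 -> 0 <= r ->
  0 < a1 + s * g1 -> 0 < a2 + s * g2 ->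
  ~ (0 < a1 /\ 0 < a2) -> ~ (0 < a1 + g1 /\ 0 < a2 + g2) ->
  ~ (0 < a1 + r /\ 0 < a2 + r * c0) -> ~ (0 < a1 + r * c0 /\ 0 < a2 + r) ->
  (r < g1 /\ g2 < 0) \/ (r < g2 /\ g1 < 0).
Proof.
  intros Hs Hc0 Hr Hin1 Hin2 Ho Hp Hq1 Hq2. destruct (Rle_or_lt a1 0) as [Ha1 | Ha1].
  - left. exact (wedge_exit_one_side a1 a2 g1 g2 c0 r s Hs Hc0 Hr Ha1 Hin1 Hin2 Hp Hq1).
  - right. apply (wedge_exit_one_side a2 a1 g2 g1 c0 r s); try tauto.
    apply Rnot_lt_le. intro. tauto.
Qed.

(* Writing p and m2 in the frame (m1, m1^perp): m2.p < 0 < r c0 <= c0 (m1.p) forces the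
   m1^perp-coordinate of p to exceed c0 r in absolute value. *)
Lemma far_pair_angle (m1 m2 p : pt) (r : R) :
  dot m1 m1 = 1 -> dot m2 m2 = 1 -> 0 <= dot m1 m2 -> dot p p <= 1 -> 0 <= r ->
  r < dot m1 p -> dot m2 p < 0 -> dot m1 m2 ^ 2 * r ^ 2 < 1 - r ^ 2.
Proof.
  intros U1 U2 Hc Hp Hr Hg Hneg.
  pose proof (dot_frame m1 m2 p) as E. pose proof (dot_frame m1 m2 m2) as Ek.
  pose proof (dot_frame m1 p p) as Eh. rewrite U1 in E, Ek, Eh. rewrite U2 in Ek.
  set (c0 := dot m1 m2) in *. set (g := dot m1 p) in *.
  set (k := cross m1 m2) in *. set (h := cross m1 p) in *.
  assert (Hcr : 0 <= c0 * r <= c0 * g) by (split; nra).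
  assert (Hkh : c0 * g < - (k * h)) by lra.
  assert (Hkh2 : (c0 * r) ^ 2 < (k * h) ^ 2) by nra.
  assert (Hk2 : (k * h) ^ 2 <= h ^ 2) by nra.
  nra.
Qed.

Lemma rot_far (m p : pt) (th r : R) :
  0 <= cos th -> 0 < sin th -> 0 <= r ->
  dot m p < 0 -> r < dot (rot th m) p -> r < dot (rot90 m) p.
Proof.
  intros Hc Hs Hr Hneg Hfar. rewrite dot_rot_r in Hfar.
  pose proof (SIN_bound th). nra.
Qed.

Lemma wedge_segment_far (m p t : pt) (th r s : R) :
  dot m m = 1 -> 0 <= cos th -> 0 < sin th -> 0 <= r -> dot p p <= 1 -> 0 <= s <= 1 ->
  wedge m (rot th m) t (pscale s p) ->
  (forall y, wedge m (rot th m) t y -> ~ (disk r y \/ y = p)) ->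
  cos th ^ 2 * r ^ 2 < 1 - r ^ 2 /\ (r < dot m p \/ r < dot (rot90 m) p).
Proof.
  intros Um Hc Hsn Hr Hp Hs Hin Hout.
  set (m2 := rot th m) in *.
  assert (U2 : dot m2 m2 = 1) by (unfold m2; rewrite dot_rot_rot; exact Um).
  assert (C12 : dot m m2 = cos th).
  { unfold m2. rewrite dot_comm, dot_rot_r, Um.
    destruct m; unfold dot, rot90; simpl; ring. }
  assert (C21 : dot m2 m = cos th) by (rewrite dot_comm; exact C12).
  assert (Excl : forall y, disk r y \/ y = p ->
    ~ (0 < - dot m t + dot m y /\ 0 < - dot m2 t + dot m2 y)).
  { intros y Hy [h1 h2]. apply (Hout y); [split; lra | exact Hy]. }
  assert (Dr : forall u, dot u u = 1 -> disk r (pscale r u)).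
  { intros u Hu. apply disk_dot; [exact Hr |].
    rewrite dot_pscale_r, dot_comm, dot_pscale_r, Hu. lra. }
  destruct Hin as [Hin1 Hin2]. rewrite dot_pscale_r in Hin1, Hin2.
  destruct (wedge_exit (- dot m t) (- dot m2 t) (dot m p) (dot m2 p) (cos th) r s)
    as [[Hfar Hneg] | [Hfar Hneg]]; try lra.
  - intro H. apply (Excl origin); [left; apply disk_dot; unfold dot, origin; simpl; nra |].
    rewrite !dot_origin_r. lra.
  - apply (Excl p). right; reflexivity.
  - intro H. apply (Excl (pscale r m)); [left; exact (Dr m Um) |].
    rewrite !dot_pscale_r, Um, C21. lra.
  - intro H. apply (Excl (pscale r m2)); [left; exact (Dr m2 U2) |].
    rewrite !dot_pscale_r, U2, C12. lra.
  - split; [| left; exact Hfar].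
    rewrite <- C12. apply (far_pair_angle m m2 p); lra.
  - split; [| right; exact (rot_far m p th r Hc Hsn Hr Hneg Hfar)].
    rewrite <- C21. apply (far_pair_angle m2 m p); lra.
Qed.

Lemma gap_dot_le_cos (D : pt -> Prop) (v1 v2 : pt) (th : R) :
  direction_set D -> D v1 -> ccw_angle v1 v2 th -> 0 <= th <= PI ->
  (forall w phi, D w -> ccw_angle v1 w phi -> ~ (0 < phi < th)) ->
  forall w, D w -> 0 < cross v1 w -> dot v1 w <= cos th.
Proof.
  intros [Hu _] Hv1 Hang Hth Hgap w Hw Hc.
  apply Rnot_lt_le. intro h.
  pose proof (Hu _ Hv1) as U1. pose proof (Hu _ Hw) as Uw.
  pose proof (dot_frame v1 w w) as Sp. rewrite U1, Uw in Sp.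
  assert (Hb : -1 < dot v1 w < 1) by nra.
  pose proof (acos_bound_lt _ Hb) as Hphi.
  set (phi := acos (dot v1 w)) in *.
  assert (Cp : cos phi = dot v1 w) by (unfold phi; apply cos_acos; lra).
  assert (Sph : sin phi = cross v1 w).
  { unfold phi. rewrite sin_acos by lra.
    replace (1 - (dot v1 w)²) with (Rsqr (cross v1 w)) by (unfold Rsqr; lra).
    apply sqrt_Rsqr; lra. }
  apply (Hgap w phi Hw).
  - split; [pose proof PI_RGT_0; lra |].
    unfold rot. rewrite Cp, Sph. destruct v1 as [a b], w as [c d].
    unfold dot, cross in *; simpl in *. f_equal; nra.
  - split; [lra |]. apply (cos_decreasing_0 th phi); lra.
Qed.

Lemma Dpair_angle (D : pt -> Prop) (v1 v2 : pt) :
  direction_set D -> alpha_le D (PI / 2) -> Dpair D v1 v2 ->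
  exists th, 0 < th <= PI / 2 /\ v2 = rot th v1 /\
    forall w, D w -> 0 < cross v1 w -> dot v1 w <= cos th.
Proof.
  intros HD Hal Hpair.
  pose proof Hpair as (Hv1 & _ & Hneq & th & Hang & Hgap).
  pose proof (Hal v1 v2 th Hpair Hang) as Hle. pose proof PI_RGT_0.
  exists th. destruct Hang as [[Hth0 _] Hrot].
  assert (Hpos : 0 < th).
  { destruct (Rle_lt_or_eq_dec 0 th Hth0) as [h | <-]; [exact h |]. exfalso.
    apply Hneq. rewrite Hrot. unfold rot. rewrite cos_0, sin_0.
    destruct v1; simpl; f_equal; ring. }
  split; [lra |]. split; [exact Hrot |].
  apply (gap_dot_le_cos D v1 v2 th HD Hv1); [split; [lra | exact Hrot] | lra | exact Hgap].
Qed.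

Lemma Dpair_translate_wedge (v1 t : pt) (th : R) (Q I : pt -> Prop) :
  dot v1 v1 = 1 -> 0 < sin th ->
  (forall x, I x <-> Q (psub x t)) ->
  (forall x, Q x <-> pspan (popp v1) (rot th v1) x) \/
  (forall x, Q x <-> pspan v1 (popp (rot th v1)) x) ->
  exists m, In m (axes v1) /\ forall y, I y <-> wedge m (rot th m) t y.
Proof.
  intros U1 Hs HIQ HQ.
  assert (Hk : 0 < cross v1 (rot th v1)) by (rewrite cross_rot_r, U1; lra).
  destruct HQ as [HQ | HQ]; [exists (rot90 v1) | exists (popp (rot90 v1))];
    (split; [unfold axes; simpl; tauto |]); intro y; rewrite HIQ, HQ;
    rewrite ?rot_popp, rot_rot90; apply (translated_pspan_wedge v1 _ t y Hk).
Qed.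

Lemma unsafe_witness (D : pt -> Prop) (r : R) (p : pt) : unsafe D r p ->
  exists s I, 0 <= s <= 1 /\ inT D I /\
    (forall y, I y -> ~ (disk r y \/ y = p)) /\ I (pscale s p).
Proof.
  intros [Hp1 Hns].
  destruct (classic (forall x, segment origin p x ->
                      CH_D D (fun y => disk r y \/ y = p) x)) as [Hall | Hn].
  { exfalso. apply Hns. split; assumption. }
  apply not_all_ex_not in Hn. destruct Hn as [x Hx].
  apply imply_to_and in Hx. destruct Hx as [[s [Hs ->]] Hch].
  apply not_all_ex_not in Hch. destruct Hch as [I HI].
  apply imply_to_and in HI. destruct HI as [HIT HI].
  apply imply_to_and in HI. destruct HI as [Hdis HIx]. apply NNPP in HIx.
  exists s, I. split; [exact Hs | split; [exact HIT | split; [exact Hdis |]]].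
  replace (pscale s p) with (padd (pscale (1 - s) origin) (pscale s p)); [exact HIx |].
  destruct p; unfold padd, pscale, origin; simpl; f_equal; ring.
Qed.

Lemma unsafe_far_along_wide_gap (D : pt -> Prop) (r : R) (p : pt) :
  direction_set D -> alpha_le D (PI / 2) -> 99/100 <= r -> unsafe D r p ->
  exists v, wide_gap D v /\ exists u, In u (axes v) /\ r < dot u p.
Proof.
  intros HD Hal Hr Hun. pose proof (disk_dot_le1 p (proj1 Hun)) as Hp.
  destruct (unsafe_witness D r p Hun) as (s & I & Hs & (Q & t & HQ & HIQ) & Hout & Hin).
  assert (Hno : ~ (I origin \/ I p)).
  { intros [h | h]; apply (Hout _ h); [left | right; reflexivity].
    apply disk_dot; unfold dot, origin; simpl; nra. }
  destruct HQ as [(d & _ & HQd) | [(d & _ & HQd) | (v1 & v2 & Hpair & HQw)]].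
  - exfalso. apply Hno, (halfplane_segment d t p s I); [| exact Hs | exact Hin].
    intro x. rewrite HIQ, HQd. reflexivity.
  - exfalso. apply Hno, (halfplane_segment (popp d) t p s I); [| exact Hs | exact Hin].
    intro x. rewrite HIQ, HQd, cross_popp_l. lra.
  - destruct (Dpair_angle D v1 v2 HD Hal Hpair) as (th & Hth & -> & Hgap).
    pose proof PI_RGT_0.
    assert (Hc : 0 <= cos th) by (apply cos_ge_0; lra).
    assert (Hsn : 0 < sin th) by (apply sin_gt_0; lra).
    assert (U1 : dot v1 v1 = 1) by (apply (proj1 HD), (proj1 Hpair)).
    destruct (Dpair_translate_wedge v1 t th Q I U1 Hsn HIQ HQw) as (m & Hm & HIw).
    destruct (wedge_segment_far m p t th r s) as [Hangle Hfar];
      try (exact (axes_unit v1 m U1 Hm)); try lra; try exact Hs.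
    { apply HIw; exact Hin. }
    { intros y Hy. apply Hout, HIw, Hy. }
    exists v1. split.
    + split; [exact (proj1 Hpair) |]. intros w Hw Hcw.
      assert (cos th <= 1/6).
      { apply Rnot_lt_le. intro Hbig.
        assert (r ^ 2 >= 9801/10000) by nra. assert (cos th ^ 2 > 1/36) by nra. nra. }
      pose proof (Hgap w Hw Hcw). lra.
    + destruct Hfar as [Hfar | Hfar]; [exists m | exists (rot90 m)];
        (split; [try apply axes_rot90; exact Hm | exact Hfar]).
Qed.

Lemma wide_gap_dot (D : pt -> Prop) (u v : pt) : direction_set D ->
  wide_gap D u -> wide_gap D v -> cross u v <> 0 -> - (1/6) <= dot u v <= 1/6.
Proof.
  intros [_ Hneg] [Hu Gu] [Hv Gv] Hc.
  assert (E1 : dot v (popp u) = - dot u v) by (destruct u, v; unfold dot, popp; simpl; ring).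
  assert (E2 : dot u (popp v) = - dot u v) by (destruct u, v; unfold dot, popp; simpl; ring).
  assert (E3 : dot v u = dot u v) by apply dot_comm.
  assert (F3 : cross v u = - cross u v) by (destruct u, v; unfold cross; simpl; ring).
  destruct (Rlt_or_le 0 (cross u v)) as [h | h].
  - pose proof (Gu v Hv h).
    pose proof (Gv (popp u) (Hneg u Hu) ltac:(rewrite cross_popp_r, F3; lra)). lra.
  - pose proof (Gu (popp v) (Hneg v Hv) ltac:(rewrite cross_popp_r; lra)).
    pose proof (Gv u Hu ltac:(rewrite F3; lra)). lra.
Qed.

(* The Gram determinant of three plane vectors vanishes, which is impossible when all
   three pairwise inner products are small. *)
Lemma no_three_almost_orthogonal (u v w : pt) :
  dot u u = 1 -> dot v v = 1 -> dot w w = 1 ->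
  - (1/6) <= dot u v <= 1/6 -> - (1/6) <= dot u w <= 1/6 -> - (1/6) <= dot v w <= 1/6 ->
  False.
Proof.
  intros Hu Hv Hw H1 H2 H3.
  assert (G : dot u u * dot v v * dot w w - dot u u * (dot v w * dot v w)
    - dot v v * (dot u w * dot u w) - dot w w * (dot u v * dot u v)
    + 2 * dot u v * dot u w * dot v w = 0).
  { destruct u, v, w; unfold dot; simpl; ring. }
  rewrite Hu, Hv, Hw in G.
  set (a := dot u v) in *. set (b := dot u w) in *. set (d := dot v w) in *.
  assert (a * a <= 1/36) by nra. assert (b * b <= 1/36) by nra.
  assert (d * d <= 1/36) by nra.
  assert (- (1/36) <= a * b <= 1/36) by (split; nra).
  assert (- (1/216) <= a * b * d) by nra.
  lra.
Qed.

Lemma wide_gap_two_axes (D : pt -> Prop) : direction_set D ->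
  exists a b, dot a a = 1 /\ dot b b = 1 /\
    forall v, wide_gap D v -> v = a \/ v = popp a \/ v = b \/ v = popp b.
Proof.
  intro HD.
  assert (Unit : forall v, wide_gap D v -> dot v v = 1) by (intros v Hv; apply (proj1 HD), Hv).
  destruct (classic (exists a, wide_gap D a)) as [[a Ha] | Hno].
  2:{ exists (1, 0), (1, 0). unfold dot; simpl. split; [lra | split; [lra |]].
      intros v Hv. exfalso. apply Hno. exists v. exact Hv. }
  pose proof (Unit a Ha) as Ua.
  assert (Hpar : forall b v, wide_gap D v -> cross b v = 0 -> dot b b = 1 -> v = b \/ v = popp b)
    by (intros b v Hv Hbv Ub; exact (unit_cross0 b v Ub (Unit v Hv) Hbv)).
  destruct (classic (exists b, wide_gap D b /\ cross a b <> 0)) as [[b [Hb Hab]] | Hnob].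
  - exists a, b. split; [exact Ua | split; [exact (Unit b Hb) |]]. intros v Hv.
    destruct (Req_dec (cross a v) 0) as [Hav | Hav]; [destruct (Hpar a v Hv Hav Ua); tauto |].
    destruct (Req_dec (cross b v) 0) as [Hbv | Hbv];
      [destruct (Hpar b v Hv Hbv (Unit b Hb)); tauto |].
    exfalso. apply (no_three_almost_orthogonal a b v Ua (Unit b Hb) (Unit v Hv));
      apply (wide_gap_dot D); assumption.
  - exists a, a. split; [exact Ua | split; [exact Ua |]]. intros v Hv.
    destruct (Req_dec (cross a v) 0) as [Hav | Hav];
      [destruct (Hpar a v Hv Hav Ua); tauto |].
    exfalso. apply Hnob. exists v. split; assumption.
Qed.

Lemma axis_caps_In (a b : pt) (t : R) (ut : pt * R) :
  In ut (axis_caps a b t) <-> In (fst ut) (axes a ++ axes b) /\ snd ut = t.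
Proof.
  unfold axis_caps. rewrite in_map_iff. destruct ut as [u t']; simpl. split.
  - intros [x [Hx Hin]]. injection Hx as -> ->. split; [exact Hin | reflexivity].
  - intros [Hin ->]. exists u. split; [reflexivity | exact Hin].
Qed.

Lemma axis_caps_valid (a b : pt) (t : R) (ut : pt * R) :
  dot a a = 1 -> dot b b = 1 -> -1 < t < 1 -> In ut (axis_caps a b t) ->
  valid_cap (fst ut) (snd ut) /\ snd ut = t.
Proof.
  intros Ua Ub Ht Hut. apply axis_caps_In in Hut. destruct Hut as [Hu ->].
  split; [split; [| exact Ht] | reflexivity].
  apply in_app_or in Hu.
  destruct Hu as [Hu | Hu]; [exact (axes_unit a _ Ua Hu) | exact (axes_unit b _ Ub Hu)].
Qed.

Lemma axis_caps_cover (a b v u p : pt) (t : R) :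
  (v = a \/ v = popp a \/ v = b \/ v = popp b) -> In u (axes v) ->
  disk 1 p -> t < dot u p ->
  exists ut, In ut (axis_caps a b t) /\ cap (fst ut) (snd ut) p.
Proof.
  intros Hv Hu Hp Hfar. exists (u, t). split; [| split; [exact Hp | simpl; lra]].
  apply axis_caps_In. split; [| reflexivity]. apply in_or_app.
  destruct Hv as [-> | [-> | [-> | ->]]];
    [left | left; apply axes_popp | right | right; apply axes_popp]; exact Hu.
Qed.

Lemma cap_base_le (t : R) : 0 <= t <= 1 -> cap_base t <= 2 * sqrt (2 * cap_height t).
Proof.
  intro Ht. unfold cap_base, cap_height. apply Rmult_le_compat_l; [lra |].
  apply sqrt_le_1_alt. nra.
Qed.

Lemma ln_le_2sqrt (x : R) : 0 < x -> ln x <= 2 * sqrt x.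
Proof.
  intro H. assert (Hs : 0 < sqrt x) by (apply sqrt_lt_R0; lra).
  assert (E : ln x = 2 * ln (sqrt x)).
  { rewrite <- (sqrt_sqrt x) at 1 by lra. rewrite ln_mult by lra. ring. }
  pose proof (exp_ineq1_le (ln (sqrt x))) as Hi. rewrite exp_ln in Hi by lra. lra.
Qed.

Lemma lnn_eventually_small (e : R) : 0 < e ->
  exists N : nat, forall n, (N <= n)%nat -> 0 < lnn n <= e.
Proof.
  intro He. destruct (INR_unbounded (4 / (e * e) + 1)) as [N HN].
  exists N. intros n Hn. apply le_INR in Hn.
  assert (H4 : e * e * (4 / (e * e)) = 4) by (field; lra).
  assert (Hq : 0 < 4 / (e * e)) by (apply Rdiv_lt_0_compat; nra).
  assert (Hn1 : 1 < INR n) by lra.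
  set (m := sqrt (INR n)).
  assert (Hm : m * m = INR n) by (apply sqrt_sqrt; lra).
  assert (Hm0 : 0 < m) by (apply sqrt_lt_R0; lra).
  assert (Hem2 : 4 < (e * m) * (e * m)).
  { rewrite <- H4. replace ((e * m) * (e * m)) with (e * e * (m * m)) by ring.
    apply Rmult_lt_compat_l; nra. }
  assert (Hem : 2 < e * m).
  { apply Rnot_le_lt. intro. assert (0 < e * m) by (apply Rmult_lt_0_compat; lra). nra. }
  assert (Hln : 0 < ln (INR n)) by (rewrite <- ln_1; apply ln_increasing; lra).
  pose proof (ln_le_2sqrt (INR n) ltac:(lra)) as Hl.
  unfold lnn. split; [apply Rdiv_lt_0_compat; lra |].
  apply Rmult_le_reg_r with (INR n); [lra |].
  unfold Rdiv. rewrite Rmult_assoc, Rinv_l, Rmult_1_r by lra.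
  fold m in Hl. replace (e * INR n) with ((e * m) * m) by (rewrite <- Hm; ring). nra.
Qed.

Theorem lemma3p12 :
  forall c : R, 0 < c ->
  exists (K : nat) (C1 C2 : R) (N : nat), 0 < C1 /\ 0 < C2 /\
  forall (n : nat), (N <= n)%nat ->
  forall D : pt -> Prop,
    direction_set D -> finite_set D -> (exists v, D v) ->
    alpha_le D (PI / 2) ->
    let r := 1 - c * sqrt (lnn n) in
    exists caps : list (pt * R),
      (length caps <= K)%nat /\
      (forall ut, In ut caps ->
         valid_cap (fst ut) (snd ut) /\
         cap_base (snd ut) <= C1 * sqrt (sqrt (lnn n)) /\
         cap_height (snd ut) <= C2 * sqrt (lnn n)) /\
      (forall p, unsafe D r p -> exists ut, In ut caps /\ cap (fst ut) (snd ut) p).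
Proof.
  intros c Hc.
  destruct (lnn_eventually_small ((/ (100 * c)) ^ 2)) as [N HN];
    [apply pow_lt, Rinv_0_lt_compat; lra |].
  exists 8%nat, (2 * sqrt (2 * c)), c, N.
  split; [apply Rmult_lt_0_compat; [lra | apply sqrt_lt_R0; lra] |]. split; [exact Hc |].
  intros n Hn D HD _ _ Hal. cbv zeta.
  destruct (HN n Hn) as [HL0 HL]. set (L := lnn n) in *.
  assert (HsL : 0 < sqrt L <= / (100 * c)).
  { split; [apply sqrt_lt_R0; exact HL0 |].
    rewrite <- (sqrt_pow2 (/ (100 * c))); [apply sqrt_le_1_alt; exact HL |].
    apply Rlt_le, Rinv_0_lt_compat; lra. }
  assert (Hcs : c * / (100 * c) = 1/100) by (field; lra).
  set (r := 1 - c * sqrt L).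
  assert (Hr : 99/100 <= r < 1) by (unfold r; split; nra).
  destruct (wide_gap_two_axes D HD) as (a & b & Ua & Ub & Hab).
  exists (axis_caps a b r). split; [unfold axis_caps; simpl; lia |]. split.
  - intros ut Hut. destruct (axis_caps_valid a b r ut Ua Ub ltac:(lra) Hut) as [Hval Hsnd].
    split; [exact Hval |]. rewrite Hsnd. split; [| unfold cap_height, r; lra].
    eapply Rle_trans; [apply cap_base_le; lra |].
    unfold cap_height, r. rewrite Rmult_assoc, <- sqrt_mult by lra.
    right. do 2 f_equal. ring.
  - intros p Hp. destruct (unsafe_far_along_wide_gap D r p HD Hal (proj1 Hr) Hp)
      as (v & Hv & u & Hu & Hfar).
    exact (axis_caps_cover a b v u p r (Hab v Hv) Hu (proj1 Hp) Hfar).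
Qed.
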